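(* The Perfect Split Heuristic $h$ is consistent on $\mathcal G_{\mathcal X,\mathcal Y}$: for every OR node $o$ with terminal child $t$ and AND children $a_1,\dots,a_s$, $$h(o)\le\min_{c\in\{t,a_1,\dots,a_s\}}\big(\mathrm{cost}(o,c)+h(c)\big),$$ and for every AND node $a$ with children $o_0,o_1$, $$h(a)\le\sum_{c\in\{o_0,o_1\}}\big(\mathrm{cost}(a,c)+h(c)\big).$$
   Context: Let $x_1,\dots,x_N\in\{0,1\}^F$ be a binary dataset $\mathcal X$ with labels $\mathcal Y\in\{0,1\}^N$, $[N]=\{1,\dots,N\}$. For $\mathcal I\subseteq[N]$, $f\in[F]$, $k\in\{0,1\}$ let $\mathcal I|_{f=k}=\{i\in\mathcal I:(x_i)_f=k\}$, $c^k(\mathcal I)=|\{i\in\mathcal I:y_i=k\}|$, $\mathcal V(\mathcal I)=\{f:\mathcal I|_{f=0}\neq\emptyset\text{ and }\mathcal I|_{f=1}\neq\emptyset\}$. Fix $\rho^1,\rho^0>0$, $\alpha\in(0,1)$, $\beta\ge0$. Let $\ell_{\rm leaf}(c^1,c^0)=B(c^1+\rho^1,c^0+\rho^0)/B(\rho^1,\rho^0)$ ($B$ the Beta function), $p_{\rm split}(d)=\alpha(1+d)^{-\beta}$, $p_{\rm leaf}(d,\mathcal I)=1$ if $\mathcal V(\mathcal I)=\emptyset$ and $1-p_{\rm split}(d)$ otherwise, $p_{\rm inner}(d,\mathcal I)=0$ if $\mathcal V(\mathcal I)=\emptyset$ and $p_{\rm split}(d)/|\mathcal V(\mathcal I)|$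 otherwise; $-\log0=+\infty$. $\mathcal G_{\mathcal X,\mathcal Y}$: for nonempty $\mathcal I\subseteq[N]$ and $d\in\{0,\dots,F\}$, an OR node $o_{\mathcal I,d}$ with a terminal child $t_{\mathcal I,d}$ via an edge of cost $-\log p_{\rm leaf}(d,\mathcal I)-\log\ell_{\rm leaf}(c^1(\mathcal I),c^0(\mathcal I))$; for $d<F$ and each $f\in\mathcal V(\mathcal I)$ an AND child $a_{\mathcal I,d,f}$ via an edge of cost $-\log p_{\rm inner}(d,\mathcal I)$, and $a_{\mathcal I,d,f}$ has cost-$0$ edges to $o_{\mathcal I|_{f=0},d+1}$ and $o_{\mathcal I|_{f=1},d+1}$; the root is $r=o_{[N],0}$ and only nodes reachable from $r$ are kept. $\mathrm{cost}(u,v)$ denotes the cost of edge $u\to v$. Perfect Split Heuristic: $h(t)=0$ for terminal nodes; $h(o_{\mathcal I,d})=-\max\{\log\ell_{\rm leaf}(c^1(\mathcal I),c^0(\mathcal I)),\ \log p_{\rm split}(d)+\log\ell_{\rm leaf}(c^1(\mathcal I),0)+\log\ell_{\rm leaf}(0,c^0(\mathcal I))\}$; $h(a_{\mathcal I,d,f})=h(o_{\mathcal I|_{f=0},d+1})+h(o_{\mathcal I|_{f=1},d+1})$. *)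

From HB Require Import structures.
From mathcomp Require Import all_boot all_order all_algebra.
From mathcomp Require Import all_classical all_reals all_analysis.
From Stdlib Require Import Relations.
Set Implicit Arguments.
Unset Strict Implicit.
Unset Printing Implicit Defensive.
Import Order.TTheory GRing.Theory Num.Theory.
Local Open Scope ring_scope.

Definition Beta (R : realType) (a b : R) : R :=
  fine (\int[@lebesgue_measure R]_(t in `]0%R, 1%R[%classic)
          ((t `^ (a - 1)) * ((1 - t) `^ (b - 1)))%:E)%E.

Definition neglog (R : realType) (p : R) : \bar R :=
  if p == 0 then +oo%E else (- ln p)%:E.

Section Graph.
Variables (R : realType) (N F : nat).
Variables (X : 'I_N -> 'I_F -> bool) (Y : 'I_N -> bool).
Variables (rho1 rho0 alpha beta : R).

Definition restr (I : {set 'I_N}) (f : 'I_F) (k : bool) : {set 'I_N} :=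
  finset.finset (fun i => (i \in I) && (X i f == k)).

Definition cnt (k : bool) (I : {set 'I_N}) : nat := #|finset.finset (fun i => (i \in I) && (Y i == k))|.

Definition Vset (I : {set 'I_N}) : {set 'I_F} :=
  finset.finset (fun f => (restr I f false != finset.set0) && (restr I f true != finset.set0)).

Definition ell_leaf (c1 c0 : nat) : R :=
  Beta (c1%:R + rho1) (c0%:R + rho0) / Beta rho1 rho0.

Definition p_split (d : nat) : R := alpha * (1 + d%:R) `^ (- beta).

Definition p_leaf (d : nat) (I : {set 'I_N}) : R :=
  if Vset I == finset.set0 then 1 else 1 - p_split d.

Definition p_inner (d : nat) (I : {set 'I_N}) : R :=
  if Vset I == finset.set0 then 0 else p_split d / #|Vset I|%:R.

Inductive node : Type :=
| OrN  of {set 'I_N} & nat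
| TermN of {set 'I_N} & nat
| AndN of {set 'I_N} & nat & 'I_F.

Definition valid (u : node) : Prop :=
  match u with
  | OrN J d | TermN J d => J != finset.set0 /\ (d <= F)%N
  | AndN J d f => [/\ J != finset.set0, (d < F)%N & f \in Vset J]
  end.

Inductive edge : node -> node -> Prop :=
| edge_leaf I d : I != finset.set0 -> (d <= F)%N -> edge (OrN I d) (TermN I d)
| edge_split I d f : I != finset.set0 -> (d < F)%N -> f \in Vset I ->
    edge (OrN I d) (AndN I d f)
| edge_and0 I d f : I != finset.set0 -> (d < F)%N -> f \in Vset I ->
    edge (AndN I d f) (OrN (restr I f false) d.+1)
| edge_and1 I d f : I != finset.set0 -> (d < F)%N -> f \in Vset I ->
    edge (AndN I d f) (OrN (restr I f true) d.+1).

Definition root : node := OrN (finset.setT : {set 'I_N}) 0.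

Definition in_graph (u : node) : Prop :=
  valid root /\ clos_refl_trans node edge root u.

(** cost(u, v) for an edge u -> v (value irrelevant on non-edges). *)
Definition cost (u v : node) : \bar R :=
  match u, v with
  | OrN J d, TermN _ _ =>
      (neglog (p_leaf d J) + neglog (ell_leaf (cnt true J) (cnt false J)))%E
  | OrN J d, AndN _ _ _ => neglog (p_inner d J)
  | _, _ => 0%E
  end.

Definition h_or (J : {set 'I_N}) (d : nat) : R :=
  - Num.max (ln (ell_leaf (cnt true J) (cnt false J)))
            (ln (p_split d) + ln (ell_leaf (cnt true J) 0)
               + ln (ell_leaf 0 (cnt false J))).

Definition h (u : node) : \bar R :=
  match u with
  | TermN _ _ => 0%E
  | OrN J d => (h_or J d)%:E
  | AndN J d f => (h_or (restr J f false) d.+1 + h_or (restr J f true) d.+1)%:E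
  end.

End Graph.

Arguments OrN {N F} _ _.
Arguments TermN {N F} _ _.
Arguments AndN {N F} _ _ _.

(** The heuristic is consistent because of three inequalities between the leaf
    likelihoods [ell a b = B(a + rho1, b + rho0) / B(rho1, rho0)]:
    [ell a b <= ell a 0 * ell 0 b], and both [a |-> ell a 0] and [b |-> ell 0 b]
    are supermultiplicative.  Since [ell a b] is the mean of [t^a (1 - t)^b] for the
    weight [t^(rho1 - 1) (1 - t)^(rho0 - 1)] on ]0, 1[, these are instances of
    Chebyshev's integral inequality for oppositely (resp. similarly) monotone
    functions.  Chebyshev's inequality is proved without Fubini: if [y] is a point
    where [u] takes its mean value [c], then [(u - c) (v - v(y))] has a constant sign
    and integrates to [E[uv] - c E[v]].
    For a leaf edge, [h(o) <= - ln ell] is one branch of the max.  For a split edge,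
    the other branch bounds [h(o)], each child satisfies
    [h(o_k) >= - (ln ell(c1_k, 0) + ln ell(0, c0_k))] because [p_split <= 1], and
    supermultiplicativity glues the two children together. *)

From HB Require Import structures.
From mathcomp Require Import all_boot all_order all_algebra.
From mathcomp Require Import all_classical all_reals all_analysis.
From Stdlib Require Import Relations.
From mathcomp Require Import measurable_realfun ring.
Set Implicit Arguments.
Unset Strict Implicit.
Unset Printing Implicit Defensive.
Import Order.TTheory GRing.Theory Num.Theory.
Local Open Scope ring_scope.
Local Open Scope classical_set_scope.

Lemma unit_itv_exprn_root (R : realType) (c : R) (a : nat) :
  0 <= c <= 1 -> (a = 0%N -> c = 1) -> exists2 y, 0 <= y <= 1 & y ^+ a = c.
Proof.
move=> /andP[c0 c1] a0c; have [a0|a_gt0] := posnP a.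
  by exists 1; rewrite ?ler01 ?lexx // a0 expr0 a0c.
have root_ge0 : 0 <= c `^ a%:R^-1 by rewrite powR_ge0.
have rootK : (c `^ a%:R^-1) ^+ a = c.
  by rewrite -powR_mulrn // -powRrM mulVf ?powRr1 // pnatr_eq0 -lt0n.
exists (c `^ a%:R^-1); rewrite ?rootK // root_ge0 /= leNgt; apply/negP => root_gt1.
by move: c1; rewrite -rootK leNgt exprn_egt1 // -lt0n a_gt0.
Qed.

Lemma mul_exprB_ge0 (R : realType) (x y : R) (a b : nat) : 0 <= x -> 0 <= y ->
  0 <= (x ^+ a - y ^+ a) * (x ^+ b - y ^+ b).
Proof.
move=> x0 y0; have [xy|/ltW yx] := leP x y.
  by apply: mulr_le0; rewrite subr_le0 lerXn2r.
by apply: mulr_ge0; rewrite subr_ge0 lerXn2r.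
Qed.

Lemma mul_exprB_onem_le0 (R : realType) (x y : R) (a b : nat) :
  0 <= x <= 1 -> 0 <= y <= 1 ->
  (x ^+ a - y ^+ a) * ((1 - x) ^+ b - (1 - y) ^+ b) <= 0.
Proof.
move=> /andP[x0 x1] /andP[y0 y1]; have [xy|/ltW yx] := leP x y.
  by apply: mulr_le0_ge0; rewrite ?subr_le0 ?subr_ge0 lerXn2r ?nnegrE ?subr_ge0 ?lerB.
by apply: mulr_ge0_le0; rewrite ?subr_le0 ?subr_ge0 lerXn2r ?nnegrE ?subr_ge0 ?lerB.
Qed.

Lemma exprn_unit_itv (R : realType) (x : R) n : 0 <= x <= 1 -> 0 <= x ^+ n <= 1.
Proof. by case/andP=> x0 x1; rewrite exprn_ge0 ?exprn_ile1. Qed.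

Section weighted_integral.
Context (R : realType) (D : set (measurableTypeR R)) (w : R -> R).
Hypotheses (mD : measurable D) (mw : measurable_fun D w)
  (w_gt0 : forall t, D t -> 0 < w t).
Local Notation mu := (@lebesgue_measure R).
Implicit Types (f g u v : R -> R).

Definition wint (g : R -> R) : R := Rintegral mu D (fun t => g t * w t).

Local Notation wintegrable g := (mu.-integrable D (EFin \o (fun t => g t * w t))).

Lemma wint_ge0 g : (forall t, D t -> 0 <= g t) -> 0 <= wint g.
Proof. by move=> g0; apply: Rintegral_ge0 => t Dt; rewrite mulr_ge0 ?g0 ?ltW ?w_gt0. Qed.

Lemma wint_le f g : wintegrable f -> wintegrable g ->
  (forall t, D t -> f t <= g t) -> wint f <= wint g.
Proof.
move=> if_ ig fg; apply: le_Rintegral => // t Dt.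
by rewrite ler_wpM2r ?fg ?ltW ?w_gt0.
Qed.

Lemma wintBZ f g a : wintegrable f -> wintegrable g ->
  wint (fun t => f t - a * g t) = wint f - a * wint g.
Proof.
move=> if_ ig; have iag : wintegrable (fun t => a * g t).
  by apply: eq_integrable mD _ _ _ (integrableZl mD a ig) => t _ /=; rewrite -EFinM mulrA.
rewrite /wint -RintegralZl // -RintegralB //.
  by apply: eq_Rintegral => t _; rewrite mulrBl mulrA.
by apply: eq_integrable mD _ _ _ iag => t _ /=; rewrite mulrA.
Qed.

Lemma integrable_wBZ f g a : wintegrable f -> wintegrable g ->
  wintegrable (fun t => f t - a * g t).
Proof.
move=> if_ ig; apply: eq_integrable mD _ _ _ (integrableB mD if_ (integrableZl mD a ig)).
by move=> t _ /=; rewrite -EFinD mulrBl mulrA.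
Qed.

Lemma wint_gt0 g : mu D != 0%E -> wintegrable g -> (forall t, D t -> 0 < g t) ->
  0 < wint g.
Proof.
move=> muD0 ig g0; rewrite lt_def wint_ge0 => [|t /g0/ltW //]; rewrite andbT.
apply/eqP => wint0; move/eqP: muD0; apply.
have gw_ge0 t : D t -> 0 <= g t * w t by move=> Dt; rewrite mulr_ge0 ?ltW ?g0 ?w_gt0.
have int_abs0 : (\int[mu]_(t in D) `|(g t * w t)%:E| = 0)%E.
  transitivity (\int[mu]_(t in D) (g t * w t)%:E)%E.
    by apply: eq_integral => t /[!inE] Dt; rewrite gee0_abs ?lee_fin ?gw_ge0.
  by rewrite -(fineK (integrable_fin_num mD ig)) -[fine _]/(wint g) wint0.
have [M [mM M0 DM]] := (ae_eq_integral_abs mu mD (measurable_int _ ig)).1 int_abs0.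
apply/eqP; rewrite -measure_le0 -M0 le_measure ?inE // => t Dt.
by apply: DM => /(_ Dt) /= /eqP; rewrite eqe mulf_eq0 !gt_eqF ?g0 ?w_gt0.
Qed.

Hypothesis iw : mu.-integrable D (EFin \o w).

Lemma integrable_wunit g : measurable_fun D g -> (forall t, D t -> 0 <= g t <= 1) ->
  wintegrable g.
Proof.
move=> mg g01; apply: (le_integrable mD _ _ iw) => [|t Dt /=].
  by apply/measurable_EFinP; apply: measurable_funM.
rewrite normrM lee_fin ler_piMl // ger0_norm; by case/andP: (g01 t Dt).
Qed.

(* The mean [c] of [u] kills the [k]-term. *)
Lemma wint_cov u v c k : wintegrable u -> wintegrable v ->
  wintegrable (fun t => u t * v t) -> c * wint (fun=> 1) = wint u ->
  wint (fun t => (u t - c) * (v t - k)) = wint (fun t => u t * v t) - c * wint v.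
Proof.
move=> iu iv iuv cE.
have i1 : wintegrable (fun=> 1) by apply: integrable_wunit => // t _; rewrite ler01 lexx.
transitivity (wint (fun t => (u t * v t - c * v t) - k * (u t - c * 1))).
  by apply: eq_Rintegral => t _; congr (_ * _); ring.
by rewrite wintBZ ?integrable_wBZ // !wintBZ // cE subrr mulr0 subr0.
Qed.

Lemma wint_le0 g : wintegrable g -> (forall t, D t -> g t <= 0) -> wint g <= 0.
Proof.
move=> ig g_le0; have i0 : wintegrable (fun=> 0).
  by apply: integrable_wunit => // t _; rewrite lexx ler01.
have wint0 : wint (fun=> 0) = 0.
  by rewrite /wint; under eq_Rintegral do rewrite mul0r; rewrite Rintegral_cst // mul0r.
by rewrite -wint0; apply: wint_le.
Qed.

Section chebyshev.
Variables (u v : R -> R) (c k : R).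
Hypotheses (mu_ : measurable_fun D u) (mv : measurable_fun D v)
  (u01 : forall t, D t -> 0 <= u t <= 1) (v01 : forall t, D t -> 0 <= v t <= 1)
  (cE : c * wint (fun=> 1) = wint u).

Let iu := integrable_wunit mu_ u01.
Let iv := integrable_wunit mv v01.
Let iuv : wintegrable (fun t => u t * v t).
Proof.
apply: integrable_wunit => [|t Dt]; first exact: measurable_funM.
case/andP: (u01 Dt) => u0 u1; case/andP: (v01 Dt) => v0 v1.
by rewrite mulr_ge0 ?mulr_ile1.
Qed.
Let E1_ge0 : 0 <= wint (fun=> 1) := wint_ge0 (fun _ _ => ler01).

Lemma chebyshev_ge : (forall t, D t -> 0 <= (u t - c) * (v t - k)) ->
  wint u * wint v <= wint (fun t => u t * v t) * wint (fun=> 1).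
Proof.
move=> cov_ge0; have := wint_ge0 cov_ge0.
rewrite (wint_cov k iu iv iuv cE) subr_ge0 -cE mulrAC => cov_le.
exact: ler_wpM2r.
Qed.

Lemma chebyshev_le : (forall t, D t -> (u t - c) * (v t - k) <= 0) ->
  wint (fun t => u t * v t) * wint (fun=> 1) <= wint u * wint v.
Proof.
move=> cov_le0.
have i1 : wintegrable (fun=> 1) by apply: integrable_wunit => // t _; rewrite ler01 lexx.
have icov : wintegrable (fun t => (u t - c) * (v t - k)).
  apply: eq_integrable mD _ _ _
    (integrable_wBZ k (integrable_wBZ c iuv iv) (integrable_wBZ c iu i1)) => t _ /=.
  by congr EFin; ring.
have := wint_le0 icov cov_le0.
rewrite (wint_cov k iu iv iuv cE) subr_le0 -cE mulrAC => cov_le.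
exact: ler_wpM2r.
Qed.

End chebyshev.

Section powers.
Variable p : R -> R.
Hypotheses (mp : measurable_fun D p) (p01 : forall t, D t -> 0 <= p t <= 1)
  (E1_gt0 : 0 < wint (fun=> 1)).

Let pX01 n t : D t -> 0 <= p t ^+ n <= 1.
Proof. by move/p01; exact: exprn_unit_itv. Qed.

Let onemX01 n t : D t -> 0 <= (1 - p t) ^+ n <= 1.
Proof.
move/p01/andP=> [p0 p1]; apply: exprn_unit_itv.
by rewrite subr_ge0 p1 gerBl.
Qed.

Let mpX n : measurable_fun D (fun t => p t ^+ n) := measurable_funX n mp.
Let monemX n : measurable_fun D (fun t => (1 - p t) ^+ n) :=
  measurable_funX n (measurable_funB (measurable_cst (1 : R)) mp).

(* A point [y] where [p ^+ a] takes its mean value; [p t ^+ a - y ^+ a] then has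
   the sign of [p t - y]. *)
Lemma wint_exprn_mean a :
  exists2 y, 0 <= y <= 1 & y ^+ a * wint (fun=> 1) = wint (fun t => p t ^+ a).
Proof.
set c := wint (fun t => p t ^+ a) / wint (fun=> 1).
have c01 : 0 <= c <= 1.
  apply/andP; split.
    by rewrite divr_ge0 ?(ltW E1_gt0) // wint_ge0 // => t /(pX01 a)/andP[].
  rewrite ler_pdivrMr // mul1r.
  apply: wint_le => [||t /(pX01 a)/andP[] //].
    exact: integrable_wunit (mpX a) (pX01 a).
  by apply: integrable_wunit => // t _; rewrite ler01 lexx.
have [a0|y y01 yc] := unit_itv_exprn_root (a := a) c01.
  by rewrite /c a0 (_ : wint (fun t => p t ^+ 0) = wint (fun=> 1)) ?divff ?gt_eqF //.
by exists y; rewrite // yc mulfVK ?gt_eqF.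
Qed.

Lemma wint_exprnD_ge a b :
  wint (fun t => p t ^+ a) * wint (fun t => p t ^+ b) <=
  wint (fun t => p t ^+ (a + b)) * wint (fun=> 1).
Proof.
have [y /andP[y0 _] yE] := wint_exprn_mean a.
have -> : wint (fun t => p t ^+ (a + b)) = wint (fun t => p t ^+ a * p t ^+ b).
  by apply: eq_Rintegral => t _; rewrite exprD.
apply: (chebyshev_ge (k := y ^+ b) (mpX a) (mpX b) (pX01 a) (pX01 b) yE).
by move=> t /p01/andP[p0 _]; exact: mul_exprB_ge0.
Qed.

Lemma wint_exprn_onem_le a b :
  wint (fun t => p t ^+ a * (1 - p t) ^+ b) * wint (fun=> 1) <=
  wint (fun t => p t ^+ a) * wint (fun t => (1 - p t) ^+ b).
Proof.
have [y y01 yE] := wint_exprn_mean a.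
apply: (chebyshev_le (k := (1 - y) ^+ b) (mpX a) (monemX b) (pX01 a) (onemX01 b) yE).
by move=> t Dt; exact: mul_exprB_onem_le0 (p01 Dt) y01.
Qed.

End powers.

End weighted_integral.

Lemma ln_le_lnD (R : realType) (x y z : R) : 0 < x -> 0 < y -> 0 < z ->
  x <= y * z -> ln x <= ln y + ln z.
Proof. by move=> x0 y0 z0; rewrite -lnM ?posrE // ler_ln ?posrE ?mulr_gt0. Qed.

Lemma lnD_le_ln (R : realType) (x y z : R) : 0 < x -> 0 < y -> 0 < z ->
  y * z <= x -> ln y + ln z <= ln x.
Proof. by move=> x0 y0 z0; rewrite -lnM ?posrE // ler_ln ?posrE ?mulr_gt0. Qed.

Section beta_integral.
Context (R : realType) (r1 r0 : R).
Local Notation mu := (@lebesgue_measure R).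
Local Notation I01 := (`]0%R, 1%R[%classic : set (measurableTypeR R)).

Definition beta_weight (t : R) : R := t `^ (r1 - 1) * (1 - t) `^ (r0 - 1).

Local Notation W := (wint I01 beta_weight).
Local Notation ell := (ell_leaf r1 r0).

Let I01P t : I01 t -> 0 < t /\ t < 1.
Proof. by rewrite /= in_itv /= => /andP. Qed.

Let mI01 : measurable I01 := measurable_itv _.

Lemma measurable_beta_weight : measurable_fun I01 beta_weight.
Proof.
apply: measurable_funM; first exact: measurable_funTS (measurable_powR _).
apply: measurable_funTS; apply: measurableT_comp (measurable_powR _) _.
exact: measurable_funB.
Qed.

Lemma beta_weight_gt0 t : I01 t -> 0 < beta_weight t.
Proof. by case/I01P=> t0 t1; rewrite mulr_gt0 // powR_gt0 // subr_gt0. Qed.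

Lemma Beta_wint a b :
  Beta (a%:R + r1) (b%:R + r0) = W (fun t => t ^+ a * (1 - t) ^+ b).
Proof.
rewrite /Beta /wint /Rintegral; congr fine; apply: eq_integral => t /[!inE] It.
have [t0 t1] := I01P It; have t'0 : 0 < 1 - t by rewrite subr_gt0.
have powRnD x r n : 0 < x -> x `^ (n%:R + r) = x ^+ n * x `^ r.
  by move=> x0; rewrite powRD ?powR_mulrn ?(ltW x0) ?(gt_eqF x0) ?implybT.
by rewrite -!addrA !powRnD // mulrACA.
Qed.

Lemma ell_leafE a b : ell a b = W (fun t => t ^+ a * (1 - t) ^+ b) / W (fun=> 1).
Proof.
have := Beta_wint 0 0; rewrite !add0r => Beta0.
rewrite /ell_leaf Beta_wint Beta0.
by congr (_ / _); apply: eq_Rintegral => t _; rewrite !expr0 mulr1.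
Qed.

Lemma ell_leafn0E a : ell a 0 = W (fun t => t ^+ a) / W (fun=> 1).
Proof.
by rewrite ell_leafE; congr (_ / _); apply: eq_Rintegral => t _; rewrite mulr1.
Qed.

Lemma ell_leaf0nE b : ell 0 b = W (fun t => (1 - t) ^+ b) / W (fun=> 1).
Proof.
by rewrite ell_leafE; congr (_ / _); apply: eq_Rintegral => t _; rewrite mul1r.
Qed.

(* If the Beta integral diverges, [fine] makes it [0] and every [ell_leaf] is
   [x / 0 = 0]. *)
Lemma ell_leaf_degenerate a b : W (fun=> 1) <= 0 -> ell a b = 0.
Proof.
move=> E1_le0; have E1_ge0 : 0 <= W (fun=> 1).
  by apply: wint_ge0 => [t /beta_weight_gt0 //|t _]; exact: ler01.
have E1_eq0 : W (fun=> 1) = 0 by apply/le_anti; rewrite E1_le0.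
by rewrite ell_leafE E1_eq0 invr0 mulr0.
Qed.

Section nondegenerate.
Hypothesis E1_gt0 : 0 < W (fun=> 1).

Lemma integrable_beta_weight : mu.-integrable I01 (EFin \o beta_weight).
Proof.
apply/integrableP; split; first by apply/measurable_EFinP; exact: measurable_beta_weight.
have -> : (\int[mu]_(t in I01) `|(EFin \o beta_weight) t|)%E =
    (\int[mu]_(t in I01) (1 * beta_weight t)%:E)%E.
  apply: eq_integral => t /[!inE] It.
  by rewrite /= mul1r ger0_norm // ltW // beta_weight_gt0.
suff : (\int[mu]_(t in I01) (1 * beta_weight t)%:E)%E \is a fin_num.
  by rewrite ltey_eq => ->.
apply: contraTT E1_gt0 => /fin_numPn[] int_oo;
  by rewrite /wint /Rintegral /= int_oo ltxx.
Qed.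

Let iw := integrable_beta_weight.
Let mw := measurable_beta_weight.
Let w_gt0 := beta_weight_gt0.

Let I01_unit t : I01 t -> 0 <= t <= 1.
Proof. by case/I01P=> t0 t1; rewrite !ltW. Qed.

Let I01_onem t : I01 t -> 0 <= 1 - t <= 1.
Proof. by case/I01P=> t0 t1; rewrite subr_ge0 gerBl !ltW. Qed.

Let monem : measurable_fun I01 (fun t : R => 1 - t) :=
  measurable_funB (measurable_cst (1 : R)) (@measurable_id _ _ _).

Let mmono a b : measurable_fun I01 (fun t : R => t ^+ a * (1 - t) ^+ b) :=
  measurable_funM (measurable_funX a (@measurable_id _ _ _)) (measurable_funX b monem).

Lemma ell_leaf_gt0 a b : 0 < ell a b.
Proof.
rewrite ell_leafE divr_gt0 //; apply: (wint_gt0 mI01 w_gt0) => [|| t /I01P[t0 t1]].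
- by rewrite lebesgue_measure_itv /= lte_fin ltr01 /= oppr0 adde0 onee_eq0.
- apply: (integrable_wunit mI01 mw iw (mmono a b)) => t /I01P[t0 t1].
  by rewrite mulr_ge0 ?mulr_ile1 ?exprn_ge0 ?exprn_ile1 ?subr_ge0 ?gerBl ?ltW.
- by rewrite mulr_gt0 // exprn_gt0 // subr_gt0.
Qed.

Lemma ell_leaf_le_mul a b : ell a b <= ell a 0 * ell 0 b.
Proof.
rewrite ell_leafE ell_leafn0E ell_leaf0nE mulrACA -invfM ler_pdivlMr ?mulr_gt0 //.
rewrite mulrA divfK ?gt_eqF //.
exact: (wint_exprn_onem_le mI01 mw w_gt0 iw (p := id) (@measurable_id _ _ _) I01_unit).
Qed.

Lemma ell_leafn0M_le a b : ell a 0 * ell b 0 <= ell (a + b) 0.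
Proof.
rewrite !ell_leafn0E mulrACA -invfM ler_pdivrMr ?mulr_gt0 // mulrA divfK ?gt_eqF //.
exact: (wint_exprnD_ge mI01 mw w_gt0 iw (p := id) (@measurable_id _ _ _) I01_unit).
Qed.

Lemma ell_leaf0nM_le a b : ell 0 a * ell 0 b <= ell 0 (a + b).
Proof.
rewrite !ell_leaf0nE mulrACA -invfM ler_pdivrMr ?mulr_gt0 // mulrA divfK ?gt_eqF //.
exact: (wint_exprnD_ge mI01 mw w_gt0 iw monem I01_onem).
Qed.

End nondegenerate.

Lemma ln_ell_leaf_le a b : ln (ell a b) <= ln (ell a 0) + ln (ell 0 b).
Proof.
have [E1_gt0|E1_le0] := ltP 0 (W (fun=> 1)).
  by rewrite ln_le_lnD ?ell_leaf_gt0 ?ell_leaf_le_mul.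
by rewrite !ell_leaf_degenerate // ln0 // addr0.
Qed.

Lemma ln_ell_leafn0D a b : ln (ell a 0) + ln (ell b 0) <= ln (ell (a + b) 0).
Proof.
have [E1_gt0|E1_le0] := ltP 0 (W (fun=> 1)).
  by rewrite lnD_le_ln ?ell_leaf_gt0 ?ell_leafn0M_le.
by rewrite !ell_leaf_degenerate // ln0 // addr0.
Qed.

Lemma ln_ell_leaf0nD a b : ln (ell 0 a) + ln (ell 0 b) <= ln (ell 0 (a + b)).
Proof.
have [E1_gt0|E1_le0] := ltP 0 (W (fun=> 1)).
  by rewrite lnD_le_ln ?ell_leaf_gt0 ?ell_leaf0nM_le.
by rewrite !ell_leaf_degenerate // ln0 // addr0.
Qed.

End beta_integral.

Local Close Scope classical_set_scope.

Lemma cnt_restr (N F : nat) (X : 'I_N -> 'I_F -> bool) (Y : 'I_N -> bool) k I f :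
  cnt Y k I = (cnt Y k (restr X I f false) + cnt Y k (restr X I f true))%N.
Proof.
rewrite /cnt -(cardsID [set i | X i f]) addnC; congr (_ + _)%N;
  by apply: eq_card => i; rewrite !inE; case: (X i f); rewrite ?andbT ?andbF.
Qed.

Lemma edge_OrNP (N F : nat) (X : 'I_N -> 'I_F -> bool) I d (c : node N F) :
  edge X (OrN I d) c -> c = TermN I d \/ exists2 f, f \in Vset X I & c = AndN I d f.
Proof. by move=> e; inversion e; [left | right; exists f]. Qed.

Section perfect_split_heuristic.
Context (R : realType) (N F : nat) (X : 'I_N -> 'I_F -> bool) (Y : 'I_N -> bool).
Context (rho1 rho0 alpha beta : R).
Hypotheses (alpha_gt0 : 0 < alpha) (alpha_le1 : alpha <= 1) (beta_ge0 : 0 <= beta).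

Local Notation L a b := (ln (ell_leaf rho1 rho0 a b)).
Local Notation psplit := (p_split alpha beta).
Local Notation hor := (h_or Y rho1 rho0 alpha beta).
Local Notation hh := (h X Y rho1 rho0 alpha beta).
Local Notation cst := (cost X Y rho1 rho0 alpha beta).

Lemma p_split_gt0 d : 0 < psplit d.
Proof. by rewrite mulr_gt0 // powR_gt0. Qed.

Lemma p_split_le1 d : psplit d <= 1.
Proof.
have pow_le1 : (1 + d%:R) `^ (- beta) <= 1.
  by rewrite -[leRHS](powRr0 (1 + d%:R)); apply: ler_powR; rewrite ?lerDl ?oppr_le0.
by rewrite /p_split -[leRHS]mul1r; apply: ler_pM; rewrite ?powR_ge0 ?(ltW alpha_gt0).
Qed.

Lemma p_innerE I d f : f \in Vset X I ->
  p_inner X alpha beta d I = psplit d / #|Vset X I|%:R.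
Proof.
move=> fV; have /negbTE V_neq0 : Vset X I != finset.set0 by apply/finset.set0Pn; exists f.
by rewrite /p_inner V_neq0.
Qed.

Lemma h_or_le_leaf I d : hor I d <= - L (cnt Y true I) (cnt Y false I).
Proof. by rewrite lerN2 le_max lexx. Qed.

Lemma h_or_le_split I d :
  hor I d <= - (ln (psplit d) + L (cnt Y true I) 0 + L 0 (cnt Y false I)).
Proof. by rewrite lerN2 le_max lexx orbT. Qed.

Lemma h_or_ge I d : - (L (cnt Y true I) 0 + L 0 (cnt Y false I)) <= hor I d.
Proof.
rewrite lerN2 ge_max ln_ell_leaf_le -addrA gerDr ln_le0 //.
exact: p_split_le1.
Qed.

Lemma h_or_le_children I d f : f \in Vset X I ->
  hor I d <= - ln (p_inner X alpha beta d I)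
             + (hor (restr X I f false) d.+1 + hor (restr X I f true) d.+1).
Proof.
move=> fV; have V_gt0 : (0 < #|Vset X I|)%N by apply/card_gt0P; exists f.
have children : - (L (cnt Y true I) 0 + L 0 (cnt Y false I)) <=
    hor (restr X I f false) d.+1 + hor (restr X I f true) d.+1.
  apply: le_trans (lerD (h_or_ge _ d.+1) (h_or_ge _ d.+1)).
  rewrite -opprD lerN2 addrACA (cnt_restr X Y true I f) (cnt_restr X Y false I f).
  by apply: lerD; [exact: ln_ell_leafn0D | exact: ln_ell_leaf0nD].
rewrite (p_innerE d fV) ln_div ?posrE ?p_split_gt0 ?ltr0n //.
apply: le_trans (h_or_le_split I d) _; rewrite -addrA opprD lerD // lerN2 gerBl.
by rewrite ln_ge0 // ler1n.
Qed.

Lemma h_consistent_leaf I d :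
  (hh (OrN I d) <= cst (OrN I d) (TermN I d) + hh (TermN I d))%E.
Proof.
have p_leaf_le1 : p_leaf X alpha beta d I <= 1.
  by rewrite /p_leaf; case: ifP => // _; rewrite gerBl ltW ?p_split_gt0.
cbn [h cost]; rewrite adde0 /neglog.
case: ifP => _; case: ifP => _ //=; rewrite ?leey // -EFinD lee_fin.
by rewrite (le_trans (h_or_le_leaf I d)) // lerDr oppr_ge0 ln_le0.
Qed.

Lemma h_consistent_split I d f : f \in Vset X I ->
  (hh (OrN I d) <= cst (OrN I d) (AndN I d f) + hh (AndN I d f))%E.
Proof.
move=> fV; have p_inner_gt0 : 0 < p_inner X alpha beta d I.
  by rewrite (p_innerE d fV) divr_gt0 ?p_split_gt0 // ltr0n; apply/card_gt0P; exists f.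
by cbn [h cost]; rewrite /neglog gt_eqF // -EFinD lee_fin h_or_le_children.
Qed.

Lemma h_consistent_and I d f :
  let a := AndN I d f in
  let o0 := OrN (restr X I f false) d.+1 in
  let o1 := OrN (restr X I f true) d.+1 in
  (hh a <= (cst a o0 + hh o0) + (cst a o1 + hh o1))%E.
Proof.
cbn [h cost]; move: (hor _ d.+1) (hor _ d.+1) => x y.
by rewrite !add0r EFinD.
Qed.

End perfect_split_heuristic.

Theorem theorem8 (R : realType) (N F : nat)
    (X : 'I_N -> 'I_F -> bool) (Y : 'I_N -> bool)
    (rho1 rho0 alpha beta : R) :
  0 < rho1 -> 0 < rho0 -> 0 < alpha -> alpha < 1 -> 0 <= beta ->
  let G := in_graph X in
  let hh := h X Y rho1 rho0 alpha beta in
  let cst := cost X Y rho1 rho0 alpha beta in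
  (* OR nodes: h(o) <= cost(o,c) + h(c) for every child c (i.e. <= the min) *)
  (forall (I : {set 'I_N}) (d : nat) (c : node N F),
      G (OrN I d) -> edge X (OrN I d) c ->
      (hh (OrN I d) <= cst (OrN I d) c + hh c)%E) /\
  (* AND nodes: h(a) <= sum over its two children of cost(a,c) + h(c) *)
  (forall (I : {set 'I_N}) (d : nat) (f : 'I_F),
      G (AndN I d f) ->
      let a := AndN I d f in
      let o0 := OrN (restr X I f false) d.+1 in
      let o1 := OrN (restr X I f true) d.+1 in
      (hh a <= (cst a o0 + hh o0) + (cst a o1 + hh o1))%E).
Proof.
move=> _ _ alpha_gt0 /ltW alpha_le1 beta_ge0 G hh cst; rewrite {}/hh {}/cst.
split=> [I d c _ /edge_OrNP [->|[f fV ->]] | I d f _].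
- exact: (h_consistent_leaf X Y rho1 rho0 beta alpha_gt0 I d).
- exact: (h_consistent_split Y rho1 rho0 alpha_gt0 alpha_le1 beta_ge0 d fV).
- exact: (h_consistent_and X Y rho1 rho0 alpha beta I d f).
Qed.
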